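(* Let $\xi<-6$. There exists $\phi_0\in(0,\pi/4]$ such that for every $\phi\in(0,\phi_0]$ there is $c=c(\xi,\phi)>0$ such that for $z=u+\mathrm{i}v$ and each $i\in\{1,2,5,6\}$, $$\operatorname{Re}[2\mathrm{i}\theta(z)]\ge c v^2\ \text{ for } z\in\Omega_{i1}\cup\Omega_{i3},\qquad \operatorname{Re}[2\mathrm{i}\theta(z)]\le -c v^2\ \text{ for } z\in\Omega_{i2}\cup\Omega_{i4}.$$
   Context: $\theta(z)=\frac12(z+z^{-1})\big[\xi-2+(z-z^{-1})^2\big]$. For $\xi<-6$ the stationary points of $\theta$ are $\zeta_1=\sqrt{(-\xi-\sqrt{\xi^2-36})/6}\in(0,1)$, $\zeta_2=-\zeta_1$, $\zeta_3=1$, $\zeta_4=-1$, $\zeta_5=1/\zeta_1$, $\zeta_6=-\zeta_5$. With $z=u+\mathrm{i}v$ and $t_\phi=\tan\phi$, the regions are: $\Omega_{11}=\{\zeta_1/2<u<\zeta_1,\ 0<v<(\zeta_1-u)t_\phi\}$, $\Omega_{12}=\{\zeta_1<u<\frac{\zeta_1+1}{2},\ 0<v<(u-\zeta_1)t_\phi\}$, $\Omega_{13}=\{\zeta_1<u<\frac{\zeta_1+1}{2},\ -(u-\zeta_1)t_\phi<v<0\}$, $\Omega_{14}=\{\zeta_1/2<u<\zeta_1,\ -(\zeta_1-u)t_\phi<v<0\}$; $\Omega_{21}=\{\zeta_2<u<\zeta_2/2,\ 0<v<(u-\zeta_2)t_\phi\}$, $\Omega_{22}=\{\frac{\zeta_2-1}{2}<u<\zeta_2,\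 0<v<(\zeta_2-u)t_\phi\}$, $\Omega_{23}=\{\frac{\zeta_2-1}{2}<u<\zeta_2,\ -(\zeta_2-u)t_\phi<v<0\}$, $\Omega_{24}=\{\zeta_2<u<\zeta_2/2,\ -(u-\zeta_2)t_\phi<v<0\}$; $\Omega_{51}=\{\frac{1+\zeta_5}{2}<u<\zeta_5,\ 0<v<(\zeta_5-u)t_\phi\}$, $\Omega_{52}=\{u>\zeta_5,\ 0<v<(u-\zeta_5)t_\phi\}$, $\Omega_{53}=\{u>\zeta_5,\ -(u-\zeta_5)t_\phi<v<0\}$, $\Omega_{54}=\{\frac{1+\zeta_5}{2}<u<\zeta_5,\ -(\zeta_5-u)t_\phi<v<0\}$; $\Omega_{61}=\{\zeta_6<u<\frac{\zeta_6-1}{2},\ 0<v<(u-\zeta_6)t_\phi\}$, $\Omega_{62}=\{u<\zeta_6,\ 0<v<(\zeta_6-u)t_\phi\}$, $\Omega_{63}=\{u<\zeta_6,\ -(\zeta_6-u)t_\phi<v<0\}$, $\Omega_{64}=\{\zeta_6<u<\frac{\zeta_6-1}{2},\ -(u-\zeta_6)t_\phi<v<0\}$. *)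

From Stdlib Require Import Reals Lra.
From Coquelicot Require Import Coquelicot.
Open Scope R_scope.

Definition theta (xi : R) (z : C) : C :=
  ((/ 2) * (z + / z) * (RtoC (xi - 2) + (z - / z) * (z - / z)))%C.

Definition ReP (xi : R) (z : C) : R := Re (2 * Ci * theta xi z)%C.

Definition zeta1 (xi : R) : R := sqrt ((- xi - sqrt (xi ^ 2 - 36)) / 6).
Definition zeta2 (xi : R) : R := - zeta1 xi.
Definition zeta5 (xi : R) : R := / zeta1 xi.
Definition zeta6 (xi : R) : R := - zeta5 xi.

(* Omega i j, for i in {1,2,5,6}, j in {1,2,3,4}, as a predicate on (u,v),
   z = u + i v; t = tan phi. Other indices: empty. *)
Definition Omega (xi phi : R) (i j : nat) (u v : R) : Prop :=
  let t := tan phi in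
  let z1 := zeta1 xi in let z2 := zeta2 xi in
  let z5 := zeta5 xi in let z6 := zeta6 xi in
  match i, j with
  | 1%nat, 1%nat => z1 / 2 < u < z1 /\ 0 < v < (z1 - u) * t
  | 1%nat, 2%nat => z1 < u < (z1 + 1) / 2 /\ 0 < v < (u - z1) * t
  | 1%nat, 3%nat => z1 < u < (z1 + 1) / 2 /\ - ((u - z1) * t) < v < 0
  | 1%nat, 4%nat => z1 / 2 < u < z1 /\ - ((z1 - u) * t) < v < 0
  | 2%nat, 1%nat => z2 < u < z2 / 2 /\ 0 < v < (u - z2) * t
  | 2%nat, 2%nat => (z2 - 1) / 2 < u < z2 /\ 0 < v < (z2 - u) * t
  | 2%nat, 3%nat => (z2 - 1) / 2 < u < z2 /\ - ((z2 - u) * t) < v < 0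
  | 2%nat, 4%nat => z2 < u < z2 / 2 /\ - ((u - z2) * t) < v < 0
  | 5%nat, 1%nat => (1 + z5) / 2 < u < z5 /\ 0 < v < (z5 - u) * t
  | 5%nat, 2%nat => u > z5 /\ 0 < v < (u - z5) * t
  | 5%nat, 3%nat => u > z5 /\ - ((u - z5) * t) < v < 0
  | 5%nat, 4%nat => (1 + z5) / 2 < u < z5 /\ - ((z5 - u) * t) < v < 0
  | 6%nat, 1%nat => z6 < u < (z6 - 1) / 2 /\ 0 < v < (u - z6) * t
  | 6%nat, 2%nat => u < z6 /\ 0 < v < (z6 - u) * t
  | 6%nat, 3%nat => u < z6 /\ - ((z6 - u) * t) < v < 0
  | 6%nat, 4%nat => z6 < u < (z6 - 1) / 2 /\ - ((u - z6) * t) < v < 0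
  | _, _ => False
  end.

(* With k = 6 - xi and q = u^2 + v^2 one has Re[2i theta(u + iv)] = v (1 - q) G(u,v) / q^3,
   where G(u,v) = G(u,0) + v^2 H(u,v) and G(u,0) = u^2 (3 (u^2+1)^2 - k u^2) has simple roots
   exactly at the stationary points +-zeta1, +-zeta5.  On a sector |v| < |u - zeta| tan phi
   around such a root, |G(u,0)| >~ |u - zeta| > |v| / tan phi, which beats the bounded
   correction v^2 H once tan phi is small; so G has the sign of G(u,0) and |G| >~ |v|.  As
   1 - q stays away from 0 on each sector, this gives Re[2i theta] = +-(>~ v^2).  On the
   unbounded sector right of zeta5, for u >= 3 zeta5 the term 3 u^2 q^2 dominates G outright.
   Re[2i theta] is even in u and odd in v, which reduces all sixteen sectors to the four
   upper ones at zeta1 and zeta5. *)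

From Stdlib Require Import Reals Lra Psatz.
From Coquelicot Require Import Coquelicot.
Open Scope R_scope.

Lemma pow2_le_of_abs_le x y : Rabs x <= y -> x^2 <= y^2.
Proof.
  intro h; rewrite <- (pow2_abs x).
  apply pow_incr; split; [apply Rabs_pos | exact h].
Qed.

Definition G_factor (k u v : R) : R :=
  let q := u^2 + v^2 in 3*u^2*(q+1)^2 - v^2*(q-1)^2 - k*q^2.

Definition G_corr (k u v : R) : R :=
  let q := u^2 + v^2 in 3*u^2*(2*u^2+v^2+2) - (q-1)^2 - k*(2*u^2+v^2).

Definition G_corr_bound (k U : R) : R := 3*U^2*(3*U^2+2) + (2*U^2+1)^2 + 3*k*U^2.

Definition ReP_form (k u v : R) : R :=
  let q := u^2 + v^2 in v * (1 - q) * G_factor k u v / q^3.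

(* At z = 0 both sides vanish, since [/ 0 = 0]. *)
Lemma ReP_eq_form xi u v : ReP xi (u, v) = ReP_form (6 - xi) u v.
Proof.
  unfold ReP, theta, ReP_form, G_factor; simpl.
  unfold Cinv, Cplus, Cminus, Cmult, Copp, RtoC, Ci; simpl.
  destruct (Req_dec (u^2 + v^2) 0) as [h0 | hq].
  - assert (u = 0 /\ v = 0) as [-> ->] by nra.
    unfold Rdiv; rewrite !Rmult_0_l, !Rplus_0_l, Rinv_0.
    ring.
  - field; nra.
Qed.

Lemma ReP_form_oppu k u v : ReP_form k (-u) v = ReP_form k u v.
Proof. unfold ReP_form, G_factor; replace ((-u)^2) with (u^2) by ring; reflexivity. Qed.

Lemma ReP_form_oppv k u v : ReP_form k u (-v) = - ReP_form k u v.
Proof. unfold ReP_form, G_factor; replace ((-v)^2) with (v^2) by ring; unfold Rdiv; ring. Qed.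

Lemma G_factor_split k u v : G_factor k u v = G_factor k u 0 + v^2 * G_corr k u v.
Proof. unfold G_factor, G_corr; cbv zeta; ring. Qed.

(* With k = 6 - xi, the positive roots s of [k s^2 = 3 (s^2+1)^2] are zeta1 and zeta5. *)
Lemma G_factor0_roots k s u : s <> 0 -> k*s^2 = 3*(s^2+1)^2 ->
  G_factor k u 0 = 3*u^2*(s*u^2 + (s^2+1)*u + s) / s^2 * ((s*u - 1)*(u - s)).
Proof.
  intros hs hk.
  apply (Rmult_eq_reg_l (s^2)); [|apply pow_nonzero; exact hs].
  transitivity (3*s^2*u^2*(u^2+1)^2 - (k*s^2)*u^4); [unfold G_factor; ring|].
  rewrite hk; field; exact hs.
Qed.

Lemma G_corr_abs_le k u v U : 0 <= k -> Rabs u <= U -> Rabs v <= U ->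
  Rabs (G_corr k u v) <= G_corr_bound k U.
Proof.
  intros hk hu hv.
  apply pow2_le_of_abs_le in hu, hv.
  unfold G_corr, G_corr_bound; apply Rabs_le.
  set (x := u^2) in *; set (y := v^2) in *.
  assert (0 <= x) by (unfold x; nra).
  assert (0 <= y) by (unfold y; nra).
  assert (0 <= 3*x*(2*x+y+2) <= 3*U^2*(3*U^2+2)) by (split; [nra | apply Rmult_le_compat; lra]).
  assert (0 <= (x+y-1)^2 <= (2*U^2+1)^2).
  { split; [apply pow2_ge_0|]; apply pow2_le_of_abs_le, Rabs_le; lra. }
  assert (0 <= k*(2*x+y) <= 3*k*U^2) by (split; nra).
  lra.
Qed.

Lemma G_factor_near_root k s r d e t u v V :
  0 < s -> k*s^2 = 3*(s^2+1)^2 -> s/2 <= u -> Rabs e = 1 ->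
  0 < r -> r * d <= e * ((s*u - 1)*(u - s)) ->
  0 < t <= 1 -> 0 < v < d * t -> d <= V ->
  Rabs (G_corr k u v) * V * t <= 3/8 * s * r ->
  3/8 * s * r * v <= e * G_factor k u v.
Proof.
  intros hs hk hu he hr hroot ht hv hdV hcorr.
  assert (hd : v < d) by nra.
  set (w := 3*u^2*(s*u^2 + (s^2+1)*u + s) / s^2).
  assert (hw : 3/4 * s <= w).
  { apply (Rmult_le_reg_r (s^2)); [nra|].
    replace (w * s^2) with (3*u^2*(s*u^2 + (s^2+1)*u + s)) by (unfold w; field; lra).
    replace (3/4 * s * s^2) with (3*(s^2/4)*s) by field.
    apply Rmult_le_compat; nra. }
  assert (hG0 : 3/4 * s * r * d <= e * G_factor k u 0).
  { rewrite (G_factor0_roots k s u) by lra; fold w.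
    replace (e * (w * ((s*u-1)*(u-s)))) with (w * (e * ((s*u-1)*(u-s)))) by ring.
    apply Rle_trans with (w * (r * d)); [|apply Rmult_le_compat_l; lra].
    replace (3/4 * s * r * d) with (3/4 * s * (r * d)) by field.
    apply Rmult_le_compat_r; nra. }
  assert (hv2 : v^2 <= d * V * t) by nra.
  assert (hH : Rabs (e * (v^2 * G_corr k u v)) <= d * (3/8 * s * r)).
  { rewrite Rabs_mult, he, Rabs_mult, (Rabs_pos_eq (v^2)) by nra.
    apply Rle_trans with (d * V * t * Rabs (G_corr k u v)).
    - rewrite Rmult_1_l; apply Rmult_le_compat_r; [apply Rabs_pos|exact hv2].
    - nra. }
  rewrite G_factor_split, Rmult_plus_distr_l.
  apply Rabs_le_between in hH.
  nra.
Qed.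

Lemma ReP_form_signed_lower k u v e f d b Q :
  0 < v -> u^2 + v^2 <= Q -> 0 < d <= f * (1 - (u^2 + v^2)) ->
  0 < b -> b * v <= e * G_factor k u v ->
  d * b / Q^3 * v^2 <= f * e * ReP_form k u v.
Proof.
  intros hv hQ hd hb hG.
  set (q := u^2 + v^2) in *.
  assert (hq : 0 < q) by (unfold q; nra).
  assert (hq3 : q^3 <= Q^3) by (apply pow_incr; lra).
  assert (0 < q^3) by (apply pow_lt; lra).
  unfold ReP_form; fold q.
  replace (f * e * (v * (1 - q) * G_factor k u v / q^3))
    with ((v * (f * (1 - q)) * (e * G_factor k u v)) / q^3) by (field; lra).
  apply Rle_trans with ((v * d * (b * v)) / q^3).
  - unfold Rdiv; replace (d * b * / Q^3 * v^2) with ((v * d * (b * v)) * / Q^3) by ring.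
    apply Rmult_le_compat_l; [apply Rmult_le_pos; nra|].
    apply Rinv_le_contravar; lra.
  - unfold Rdiv; apply Rmult_le_compat_r; [apply Rlt_le, Rinv_0_lt_compat; lra|].
    apply Rmult_le_compat; nra.
Qed.

Lemma ReP_form_far k u v : 3 <= u -> 0 < v <= u -> k <= 4/3 * u^2 ->
  16/27 * v^2 <= - ReP_form k u v.
Proof.
  intros hu hv hk.
  set (q := u^2 + v^2).
  assert (hq : 9 <= q) by (unfold q; nra).
  assert (hG : q^2 * (2/3 * u^2) <= G_factor k u v).
  { replace (G_factor k u v)
      with (q^2 * (3*u^2 - v^2 - k) + 3*u^2*(2*q+1) + v^2*(2*q-1)) by (unfold G_factor, q; ring).
    assert (2/3 * u^2 <= 3*u^2 - v^2 - k) by nra.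
    nra. }
  replace (- ReP_form k u v) with (v * (q-1) * G_factor k u v / q^3) by (unfold ReP_form; fold q; field; lra).
  apply (Rle_div_r _ _ (q^3)); [apply pow_lt; lra|].
  assert (8/9 * q <= q - 1) by lra.
  assert (v <= u^2) by nra.
  apply Rle_trans with (v * (8/9 * q) * (q^2 * (2/3 * u^2))).
  - replace (v * (8/9 * q) * (q^2 * (2/3 * u^2))) with (16/27 * (v * u^2) * q^3) by field.
    apply Rmult_le_compat_r; [apply pow_le; lra|].
    apply Rmult_le_compat_l; [lra|].
    replace (v^2) with (v * v) by ring; apply Rmult_le_compat_l; lra.
  - apply Rmult_le_compat; try nra.
Qed.

Lemma le_Rmin_1_div t b M : 0 < M -> 0 < t <= Rmin 1 (b / M) -> t <= 1 /\ M * t <= b.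
Proof.
  intros hM [ht ht0]; split.
  - eapply Rle_trans; [exact ht0 | apply Rmin_l].
  - rewrite Rmult_comm; apply Rle_div_r; [exact hM|].
    eapply Rle_trans; [exact ht0 | apply Rmin_r].
Qed.

Lemma stationary_k_le k s : 1 <= s -> k * s^2 = 3 * (s^2 + 1)^2 -> k <= 12 * s^2.
Proof.
  intros hs hk.
  apply (Rmult_le_reg_r (s^2)); [nra|].
  assert (s^2 + 1 <= 2 * s^2) by nra.
  rewrite hk; nra.
Qed.

Lemma ReP_form_near_zeta1 k p e t u v :
  0 < p < 1 -> k*p^2 = 3*(p^2+1)^2 -> Rabs e = 1 ->
  0 < t <= 1 -> G_corr_bound k 1 * t <= 3/8 * p * (1 - p) ->
  p/2 < u < (p+1)/2 -> 0 < v < Rabs (u - p) * t ->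
  (1 - p) * Rabs (u - p) <= e * ((p*u - 1)*(u - p)) ->
  (1 - p^2)/2 * (3/8 * p * (1 - p)) * v^2 <= e * ReP_form k u v.
Proof.
  intros hp hk he ht htM hu hv hroot.
  pose proof (Rabs_pos (u - p)).
  assert (hd : Rabs (u - p) <= 1/2) by (apply Rabs_le; lra).
  assert (hvd : v^2 <= (u - p)^2).
  { rewrite <- (pow2_abs (u - p)); apply pow2_le_of_abs_le; rewrite Rabs_pos_eq; nra. }
  assert (hq : u^2 + v^2 <= (1 + p^2)/2) by nra.
  replace (e * ReP_form k u v) with (1 * e * ReP_form k u v) by ring.
  apply Rle_trans with ((1 - p^2)/2 * (3/8 * p * (1 - p)) / 1^3 * v^2); [right; field|].
  apply ReP_form_signed_lower; [lra | nra | split; nra | nra |].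
  apply (G_factor_near_root k p (1 - p) (Rabs (u - p)) e t u v 1); try lra.
  rewrite Rmult_1_r; apply Rle_trans with (G_corr_bound k 1 * t); [|exact htM].
  apply Rmult_le_compat_r; [lra|].
  apply G_corr_abs_le; [nra | apply Rabs_le | apply Rabs_le]; nra.
Qed.

Lemma ReP_form_near_zeta5 k a e t u v :
  1 < a -> k*a^2 = 3*(a^2+1)^2 -> Rabs e = 1 ->
  0 < t <= 1 -> G_corr_bound k (3*a) * (2*a) * t <= 3/8 * a * (a - 1) ->
  (1+a)/2 < u <= 3*a -> 0 < v < Rabs (u - a) * t ->
  (a - 1) * Rabs (u - a) <= e * ((a*u - 1)*(u - a)) ->
  (a - 1)*(a + 3)/4 * (3/8 * a * (a - 1)) / (13*a^2)^3 * v^2 <= - e * ReP_form k u v.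
Proof.
  intros ha hk he ht htM hu hv hroot.
  pose proof (Rabs_pos (u - a)).
  assert (hd : Rabs (u - a) <= 2*a) by (apply Rabs_le; lra).
  assert (hvd : v^2 <= (u - a)^2).
  { rewrite <- (pow2_abs (u - a)); apply pow2_le_of_abs_le; rewrite Rabs_pos_eq; nra. }
  replace (- e * ReP_form k u v) with (-1 * e * ReP_form k u v) by ring.
  apply ReP_form_signed_lower; [lra | nra | split; nra | nra |].
  apply (G_factor_near_root k a (a - 1) (Rabs (u - a)) e t u v (2*a)); try lra.
  apply Rle_trans with (G_corr_bound k (3*a) * (2*a) * t); [|exact htM].
  apply Rmult_le_compat_r; [lra|]; apply Rmult_le_compat_r; [lra|].
  apply G_corr_abs_le; [nra | apply Rabs_le | apply Rabs_le]; nra.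
Qed.

Lemma inner_sector_estimates k p : 0 < p < 1 -> k*p^2 = 3*(p^2+1)^2 ->
  exists t0 c, 0 < t0 /\ 0 < c /\ forall t u v, 0 < t <= t0 -> 0 < v ->
    (p/2 < u < p -> v < (p - u)*t -> c*v^2 <= ReP_form k u v) /\
    (p < u < (p+1)/2 -> v < (u - p)*t -> c*v^2 <= - ReP_form k u v).
Proof.
  intros hp hk.
  set (b := 3/8 * p * (1 - p)); set (M := G_corr_bound k 1).
  assert (hb : 0 < b) by (unfold b; nra).
  assert (hM : 0 < M) by (unfold M, G_corr_bound; nra).
  exists (Rmin 1 (b / M)), ((1 - p^2)/2 * b).
  split; [apply Rmin_pos; [lra | apply Rdiv_lt_0_compat; lra]|].
  split; [apply Rmult_lt_0_compat; nra|].
  intros t u v ht hv.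
  destruct (le_Rmin_1_div t b M hM ht) as [ht1 htM].
  split; intros hu hvt.
  - replace (ReP_form k u v) with (1 * ReP_form k u v) by ring.
    apply (ReP_form_near_zeta1 k p 1 t);
      [lra | exact hk | apply Rabs_R1 | lra | exact htM | lra | rewrite Rabs_left by lra; lra |].
    assert (0 <= (p - u) * (p * (1 - u))) by (apply Rmult_le_pos; nra).
    rewrite Rabs_left by lra; nra.
  - replace (- ReP_form k u v) with (-1 * ReP_form k u v) by ring.
    apply (ReP_form_near_zeta1 k p (-1) t);
      [lra | exact hk | rewrite Rabs_left; lra | lra | exact htM | lra | rewrite Rabs_right by lra; lra |].
    assert (0 <= (u - p) * (p * (1 - u))) by (apply Rmult_le_pos; nra).
    rewrite Rabs_right by lra; nra.
Qed.

Lemma outer_sector_estimates k a : 1 < a -> k*a^2 = 3*(a^2+1)^2 ->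
  exists t0 c, 0 < t0 /\ 0 < c /\ forall t u v, 0 < t <= t0 -> 0 < v ->
    ((1+a)/2 < u < a -> v < (a - u)*t -> c*v^2 <= ReP_form k u v) /\
    (a < u -> v < (u - a)*t -> c*v^2 <= - ReP_form k u v).
Proof.
  intros ha hk.
  set (b := 3/8 * a * (a - 1)); set (M := G_corr_bound k (3*a) * (2*a)).
  set (cn := (a - 1)*(a + 3)/4 * b / (13*a^2)^3).
  assert (hb : 0 < b) by (unfold b; nra).
  assert (hM : 0 < M) by (unfold M, G_corr_bound; nra).
  assert (hcn : 0 < cn).
  { unfold cn; apply Rdiv_lt_0_compat; [apply Rmult_lt_0_compat; nra | apply pow_lt; nra]. }
  exists (Rmin 1 (b / M)), (Rmin cn (16/27)).
  split; [apply Rmin_pos; [lra | apply Rdiv_lt_0_compat; lra]|].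
  split; [apply Rmin_pos; lra|].
  intros t u v ht hv.
  destruct (le_Rmin_1_div t b M hM ht) as [ht1 htM].
  assert (hcn_le : Rmin cn (16/27) * v^2 <= cn * v^2).
  { apply Rmult_le_compat_r; [nra | apply Rmin_l]. }
  split; intros hu hvt.
  - replace (ReP_form k u v) with (- (-1) * ReP_form k u v) by ring.
    apply (Rle_trans _ _ _ hcn_le), (ReP_form_near_zeta5 k a (-1) t);
      [lra | exact hk | rewrite Rabs_left; lra | lra | exact htM | lra | rewrite Rabs_left by lra; lra |].
    assert (0 <= (a - u) * (a * (u - 1))) by (apply Rmult_le_pos; nra).
    rewrite Rabs_left by lra; nra.
  - destruct (Rle_or_lt u (3*a)) as [hu3 | hu3].
    + replace (- ReP_form k u v) with (- (1) * ReP_form k u v) by ring.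
      apply (Rle_trans _ _ _ hcn_le), (ReP_form_near_zeta5 k a 1 t);
        [lra | exact hk | apply Rabs_R1 | lra | exact htM | lra | rewrite Rabs_right by lra; lra |].
      assert (0 <= (u - a) * (a * (u - 1))) by (apply Rmult_le_pos; nra).
      rewrite Rabs_right by lra; nra.
    + apply Rle_trans with (16/27 * v^2); [apply Rmult_le_compat_r; [nra | apply Rmin_r]|].
      assert (hk12 := stationary_k_le k a ltac:(lra) hk).
      assert (9 * a^2 < u^2) by nra.
      apply ReP_form_far; [lra | split; nra | nra].
Qed.

Lemma zeta1_stationary xi : xi < -6 ->
  0 < zeta1 xi < 1 /\ (6 - xi) * zeta1 xi ^ 2 = 3 * (zeta1 xi ^ 2 + 1)^2.
Proof.
  intro hxi; unfold zeta1.
  set (S := sqrt (xi^2 - 36)).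
  assert (hS : 0 <= S) by apply sqrt_pos.
  assert (hS2 : S * S = xi^2 - 36) by (apply sqrt_sqrt; nra).
  set (s := (- xi - S) / 6).
  assert (hs : 0 < s < 1) by (unfold s; split; nra).
  assert (hsqrt2 : sqrt s ^ 2 = s) by (rewrite <- Rsqr_pow2; apply Rsqr_sqrt; lra).
  assert (hsqrt : 0 < sqrt s) by (apply sqrt_lt_R0; lra).
  rewrite hsqrt2; split; [split; nra|].
  unfold s; nra.
Qed.

Lemma stationary_inv k s : s <> 0 -> k * s^2 = 3 * (s^2 + 1)^2 ->
  k * (/ s)^2 = 3 * ((/ s)^2 + 1)^2.
Proof.
  intros hs hk.
  replace (3 * ((/ s)^2 + 1)^2) with (3 * (s^2 + 1)^2 / s^4) by (field; exact hs).
  rewrite <- hk; field; exact hs.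
Qed.

Lemma atan_pos_le_PI4 t : 0 < t <= 1 -> 0 < atan t <= PI / 4.
Proof.
  intros [ht ht1]; rewrite <- atan_0, <- atan_1; split.
  - now apply atan_increasing.
  - destruct ht1 as [ht1 | ->]; [left; now apply atan_increasing | right; reflexivity].
Qed.

Lemma tan_le_of_le_atan t phi : 0 < t <= 1 -> 0 < phi <= atan t -> 0 < tan phi <= t.
Proof.
  intros ht [hphi hle].
  pose proof (atan_pos_le_PI4 t ht) as [_ hPI4].
  pose proof PI_RGT_0.
  split; [apply tan_gt_0; lra|].
  rewrite <- (tan_atan t).
  apply tan_incr_1; lra.
Qed.

Lemma Omega_reflect_v xi phi i u v :
  (Omega xi phi i 3 u v <-> Omega xi phi i 2 u (-v)) /\
  (Omega xi phi i 4 u v <-> Omega xi phi i 1 u (-v)).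
Proof.
  unfold Omega; destruct i as [|[|[|[|[|[|[|i]]]]]]]; cbn -[zeta1 zeta2 zeta5 zeta6 tan];
    split; split; intros H; try contradiction; lra.
Qed.

Lemma Omega_reflect_u xi phi j u v :
  (Omega xi phi 2 j u v <-> Omega xi phi 1 j (-u) v) /\
  (Omega xi phi 6 j u v <-> Omega xi phi 5 j (-u) v).
Proof.
  unfold Omega, zeta2, zeta6; destruct j as [|[|[|[|[|j]]]]]; cbn -[zeta1 zeta5 tan];
    split; split; intros H; try contradiction; lra.
Qed.

Lemma ReP_sector_signs xi phi i c c' : 0 <= c <= c' ->
  (forall u v, Omega xi phi i 1 u v -> c' * v^2 <= ReP_form (6 - xi) u v) ->
  (forall u v, Omega xi phi i 2 u v -> c' * v^2 <= - ReP_form (6 - xi) u v) ->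
  forall u v,
    ((Omega xi phi i 1 u v \/ Omega xi phi i 3 u v) -> ReP xi (u, v) >= c * v ^ 2) /\
    ((Omega xi phi i 2 u v \/ Omega xi phi i 4 u v) -> ReP xi (u, v) <= - (c * v ^ 2)).
Proof.
  intros hc H1 H2 u v.
  destruct (Omega_reflect_v xi phi i u v) as [E3 E4].
  rewrite ReP_eq_form.
  assert (hv : 0 <= v^2) by nra.
  split; intros [H | H].
  - apply H1 in H; nra.
  - apply E3, H2 in H.
    rewrite ReP_form_oppv in H; replace ((-v)^2) with (v^2) in H by ring; nra.
  - apply H2 in H; nra.
  - apply E4, H1 in H.
    rewrite ReP_form_oppv in H; replace ((-v)^2) with (v^2) in H by ring; nra.
Qed.

Theorem mainTheorem5 (xi : R) (hxi : xi < -6) :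
  exists phi0 : R, 0 < phi0 <= PI / 4 /\
    forall phi : R, 0 < phi <= phi0 ->
      exists c : R, 0 < c /\
        forall i : nat, (i = 1%nat \/ i = 2%nat \/ i = 5%nat \/ i = 6%nat) ->
          forall u v : R,
            ((Omega xi phi i 1 u v \/ Omega xi phi i 3 u v) ->
               ReP xi (u, v) >= c * v ^ 2) /\
            ((Omega xi phi i 2 u v \/ Omega xi phi i 4 u v) ->
               ReP xi (u, v) <= - (c * v ^ 2)).
Proof.
  destruct (zeta1_stationary xi hxi) as [hp hkp].
  assert (ha : 1 < zeta5 xi).
  { unfold zeta5; rewrite <- Rinv_1; apply Rinv_lt_contravar; lra. }
  pose proof (stationary_inv _ _ (Rgt_not_eq _ _ (proj1 hp)) hkp) as hka; fold (zeta5 xi) in hka.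
  destruct (inner_sector_estimates _ _ hp hkp) as (tp & cp & htp & hcp & Hp).
  destruct (outer_sector_estimates _ _ ha hka) as (ta & ca & hta & hca & Ha).
  set (t0 := Rmin 1 (Rmin tp ta)).
  assert (ht0 : 0 < t0 <= 1) by (split; [repeat apply Rmin_pos; lra | apply Rmin_l]).
  exists (atan t0); split; [now apply atan_pos_le_PI4|].
  intros phi hphi.
  destruct (tan_le_of_le_atan t0 phi ht0 hphi) as [ht htt0].
  assert (htp' : 0 < tan phi <= tp)
    by (split; [lra | apply (Rle_trans _ _ _ htt0), (Rle_trans _ _ _ (Rmin_r _ _)), Rmin_l]).
  assert (hta' : 0 < tan phi <= ta)
    by (split; [lra | apply (Rle_trans _ _ _ htt0), (Rle_trans _ _ _ (Rmin_r _ _)), Rmin_r]).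
  exists (Rmin cp ca); split; [now apply Rmin_pos|].
  assert (hcp' : 0 <= Rmin cp ca <= cp) by (split; [apply Rlt_le, Rmin_pos | apply Rmin_l]; lra).
  assert (hca' : 0 <= Rmin cp ca <= ca) by (split; [apply Rlt_le, Rmin_pos | apply Rmin_r]; lra).
  intros i [-> | [-> | [-> | ->]]].
  - apply (ReP_sector_signs _ _ _ _ cp hcp'); intros u v [hu [hv hvt]].
    + now apply (Hp _ u v htp' hv).
    + now apply (Hp _ u v htp' hv).
  - apply (ReP_sector_signs _ _ _ _ cp hcp'); intros u v H;
      apply Omega_reflect_u in H; destruct H as [hu [hv hvt]]; rewrite <- ReP_form_oppu.
    + now apply (Hp _ (-u) v htp' hv).
    + now apply (Hp _ (-u) v htp' hv).
  - apply (ReP_sector_signs _ _ _ _ ca hca'); intros u v [hu [hv hvt]].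
    + now apply (Ha _ u v hta' hv).
    + now apply (Ha _ u v hta' hv).
  - apply (ReP_sector_signs _ _ _ _ ca hca'); intros u v H;
      apply Omega_reflect_u in H; destruct H as [hu [hv hvt]]; rewrite <- ReP_form_oppu.
    + now apply (Ha _ (-u) v hta' hv).
    + now apply (Ha _ (-u) v hta' hv).
Qed.
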